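(* For every input permutation, at every step of algorithm $\mathcal{D}^2\mathcal{I}$ we have $Top(D_1)<Top(I)$ (a statement about an empty stack being considered true).
   Context: The $\mathfrak{D}^2\mathfrak{I}$ machine consists of two decreasing stacks $D_1,D_2$ followed in series by an increasing stack $I$. Elements of $D_1,D_2$ must be in decreasing order from top to bottom (top largest); elements of $I$ in increasing order from top to bottom (top smallest). Operations: $d_0$ pushes the next input element (called $Input$) into $D_1$; $d_1$ moves $Top(D_1)$ to $D_2$; $d_2$ moves $Top(D_2)$ to $I$; $d_3$ pops $Top(I)$ and appends it to the output. Any comparison involving an empty stack is considered true. Conditions: ($\alpha$) $Top(D_2)<Top(I)$; ($\beta$) $Top(D_2)<Top(D_1)$ and $Top(D_1)<Top(I)$; ($\gamma$) $Top(D_1)<Input$, $Input<Top(I)$, and the sequence of input elements from $Input$ up to the first input element larger than $Top(D_2)$ is increasing. Algorithm $\mathcal{D}^2\mathcal{I}$ repeatedly executes the first applicable instruction among: 1. if $Top(I)$ is the next element to be output, perform $d_3$; 2. if the elements contained in $D_1\cup D_2$ are exactly the next elements to be output, move them to the output in increasing order; 3. perform $d_1$ if it is legal and ($\beta$) holds; 4. perform $d_0$ if it is legal and ($\gamma$) holds; 5. perform $d_2$ if it is legal and ($\alpha$) holds; 6. otherwise perform $d_3$. *)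

From mathcomp Require Import all_boot.
Set Implicit Arguments. Unset Strict Implicit. Unset Printing Implicit Defensive.

(* Stacks are sequences of naturals; the head of the sequence is the top. *)
(* Comparison of optional values: any comparison involving an empty stack
   (or exhausted input) is considered true. *)
Definition olt (a b : option nat) : bool :=
  match a, b with Some x, Some y => x < y | _, _ => true end.

Definition top (s : seq nat) : option nat := ohead s.

Record state := State {
  inp : seq nat;    (* remaining input; head = Input *)
  D1 : seq nat;     (* decreasing stack: top largest *)
  D2 : seq nat;     (* decreasing stack: top largest *)
  I  : seq nat;     (* increasing stack: top smallest *)
  out : seq nat
}.

(* The input is a permutation of 1..n, to be sorted; the next element to be
   output is therefore (size out).+1. *)
Definition next_out (st : state) : nat := (size (out st)).+1.

Definition op_d0 (st : state) : option state :=
  match inp st with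
  | x :: r => if olt (top (D1 st)) (Some x)
              then Some (State r (x :: D1 st) (D2 st) (I st) (out st)) else None
  | [::] => None
  end.

Definition op_d1 (st : state) : option state :=
  match D1 st with
  | x :: r => if olt (top (D2 st)) (Some x)
              then Some (State (inp st) r (x :: D2 st) (I st) (out st)) else None
  | [::] => None
  end.

Definition op_d2 (st : state) : option state :=
  match D2 st with
  | x :: r => if olt (Some x) (top (I st))
              then Some (State (inp st) (D1 st) r (x :: I st) (out st)) else None
  | [::] => None
  end.

Definition op_d3 (st : state) : option state :=
  match I st with
  | x :: r => Some (State (inp st) (D1 st) (D2 st) r (rcons (out st) x))
  | [::] => None
  end.

Definition cond_alpha (st : state) : bool := olt (top (D2 st)) (top (I st)).

Definition cond_beta (st : state) : bool :=
  olt (top (D2 st)) (top (D1 st)) && olt (top (D1 st)) (top (I st)).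

(* the sequence of input elements from Input up to (and including) the first
   input element larger than Top(D2); if there is no such element, the whole
   remaining input *)
Definition gamma_segment (st : state) : seq nat :=
  take (find (fun y => olt (top (D2 st)) (Some y)) (inp st)).+1 (inp st).

Definition cond_gamma (st : state) : bool :=
  [&& olt (top (D1 st)) (top (inp st)),
      olt (top (inp st)) (top (I st)) &
      sorted ltn (gamma_segment st)].

Definition isSome {A} (o : option A) : bool := if o is Some _ then true else false.

(* One step of algorithm D^2I: the first applicable instruction is executed.
   None means no instruction can be executed (the algorithm stops). *)
Definition step (st : state) : option state :=
  if top (I st) == Some (next_out st) then op_d3 st
  else if (D1 st ++ D2 st != [::]) &&
          perm_eq (D1 st ++ D2 st) (iota (next_out st) (size (D1 st ++ D2 st)))
  then Some (State (inp st) [::] [::] (I st)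
                   (out st ++ iota (next_out st) (size (D1 st ++ D2 st))))
  else if isSome (op_d1 st) && cond_beta st then op_d1 st
  else if isSome (op_d0 st) && cond_gamma st then op_d0 st
  else if isSome (op_d2 st) && cond_alpha st then op_d2 st
  else op_d3 st.

Definition init (s : seq nat) : state := State s [::] [::] [::] [::].

Fixpoint run (k : nat) (s : seq nat) : option state :=
  match k with
  | 0 => Some (init s)
  | k'.+1 => if run k' s is Some st then step st else None
  end.

From mathcomp Require Import all_boot.

(** The claim is one conjunct of a step invariant: the elements of
    [inp ++ D1 ++ D2] are distinct, [D1] is decreasing, [I] is increasing
    and [Top(D1) < Top(I)].  Pushing onto [D1] is guarded by condition gamma,
    popping [D1] or [I] only moves the two tops apart, and emptying [D1]
    trivializes the claim.  The delicate move is [d2], which makes [Top(D2)]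
    the new top of [I]: it is executed only when [d1] was refused, so
    [Top(D2) < Top(D1)] fails, and distinctness turns this into
    [Top(D1) < Top(D2)]. *)

Lemma uniq_cat_cons (T : eqType) (s1 s2 : seq T) (x : T) :
  uniq (s1 ++ x :: s2) = uniq (x :: s1 ++ s2).
Proof. by rewrite -cat1s uniq_catCA. Qed.

Lemma olt_top_behead (a : option nat) (s : seq nat) :
  sorted ltn s -> olt a (top s) -> olt a (top (behead s)).
Proof. by case: a s => [a|] [|b [|c t]] //= /andP[bc _] ab; apply: ltn_trans bc. Qed.

Definition d2i_inv (st : state) : bool :=
  [&& uniq (inp st ++ D1 st ++ D2 st), sorted (fun a b => b < a) (D1 st),
      sorted ltn (I st) & olt (top (D1 st)) (top (I st))].

Lemma d2i_inv_d0 st st' :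
  d2i_inv st -> cond_gamma st -> op_d0 st = Some st' -> d2i_inv st'.
Proof.
case: st => [[|x r] d1 d2 i o] //; rewrite /d2i_inv /cond_gamma /op_d0 /=.
move=> /and4P[u s1 si _] /and3P[_ xi _]; case: ifP => // d1x [<-] /=.
rewrite uniq_cat_cons /= u si xi andbT.
by case: d1 s1 d1x {u} => [|a t] //= -> ->.
Qed.

Lemma d2i_inv_d1 st st' : d2i_inv st -> op_d1 st = Some st' -> d2i_inv st'.
Proof.
case: st => [ip [|x r] d2 i o] //; rewrite /d2i_inv /op_d1 /=.
move=> /and4P[u s1 si xi]; case: ifP => // _ [<-] /=.
rewrite catA uniq_cat_cons -catA -uniq_cat_cons u (path_sorted s1) si /=.
case: r s1 {u} => //= a t /andP[ax _].
by move: xi; case: (top i) => //= b; apply: ltn_trans.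
Qed.

Lemma d2i_inv_d2 st st' : d2i_inv st -> ~~ (isSome (op_d1 st) && cond_beta st) ->
  op_d2 st = Some st' -> d2i_inv st'.
Proof.
case: st => [ip d1 [|y r] i o] //; rewrite /d2i_inv /op_d2 /op_d1 /cond_beta /=.
move=> /and4P[u s1 si d1i] no_d1; case: ifP => // yi [<-] /=.
rewrite s1; have -> : path ltn y i by case: i si yi {d1i no_d1} => //= b t -> ->.
move: u; rewrite catA uniq_cat_cons -catA /= => /andP[y_new ->].
case: d1 y_new d1i no_d1 {s1} => //= a t.
rewrite !mem_cat inE negb_or => /andP[_ /norP[y_ne_a _]] ->.
by case: ltngtP y_ne_a => // ->; rewrite eqxx.
Qed.

Lemma d2i_inv_d3 st st' : d2i_inv st -> op_d3 st = Some st' -> d2i_inv st'.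
Proof.
case: st => [ip d1 d2 [|x r] o] //; rewrite /d2i_inv /op_d3 /=.
move=> /and4P[u s1 si d1x] [<-] /=.
by rewrite u s1 (path_sorted si) (olt_top_behead _ (x :: r) si d1x).
Qed.

Lemma d2i_inv_step st st' : d2i_inv st -> step st = Some st' -> d2i_inv st'.
Proof.
move=> inv_st; rewrite /step.
case: ifP => _; first exact: d2i_inv_d3.
case: ifP => _.
  move=> [<-]; move: inv_st; rewrite /d2i_inv /= cats0 cat_uniq andbT.
  by case/and3P=> /andP[-> _] _ /andP[-> _].
case: ifP => no_d1; first exact: d2i_inv_d1.
case: ifP => [/andP[_ gamma]|_]; first exact: d2i_inv_d0.
case: ifP => _; last exact: d2i_inv_d3.
exact: d2i_inv_d2 inv_st (negbT no_d1).
Qed.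

Lemma d2i_inv_run {s : seq nat} {k st} :
  uniq s -> run k s = Some st -> d2i_inv st.
Proof.
move=> uniq_s; elim: k st => [|k IHk] st /=.
  by case=> <-; rewrite /d2i_inv /= cats0 uniq_s.
case run_k: (run k s) => [st0|] // step_st0.
exact: d2i_inv_step (IHk _ run_k) step_st0.
Qed.

Theorem mainTheorem7 (n : nat) (s : seq nat) :
  perm_eq s (iota 1 n) ->
  forall (k : nat) (st : state), run k s = Some st ->
    olt (top (D1 st)) (top (I st)).
Proof.
move=> perm_s k st run_k.
have uniq_s : uniq s by rewrite (perm_uniq perm_s) iota_uniq.
by case/and4P: (d2i_inv_run uniq_s run_k).
Qed.
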